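(* If $\lambda$ is a cardinal with $\lambda>\operatorname{cf}(\lambda)=\omega$, then $\mathfrak{i}_\lambda>\lambda$.
   Context: For $\mathcal{A}\subseteq[\lambda]^\lambda$, $\operatorname{comb}(\mathcal{A})$ is the set of all sets $\bigcap\Gamma-\bigcup\Delta$ with $\Gamma,\Delta\in[\mathcal{A}]^{<\omega}$, $\Gamma\cap\Delta=\varnothing$. $\mathcal{A}\subseteq[\lambda]^\lambda$ is independent iff $\operatorname{comb}(\mathcal{A})\subseteq[\lambda]^\lambda$. The independence number $\mathfrak{i}_\lambda$ is the minimal size of a maximal (under inclusion) independent family in $[\lambda]^\lambda$. *)

From Stdlib Require Import List.
Import ListNotations.

(* A cardinal lambda is represented by a type X carrying a strict well-order R
   whose order type is the initial ordinal lambda. *)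

Definition injective {A B : Type} (f : A -> B) : Prop :=
  forall a1 a2, f a1 = f a2 -> a1 = a2.

Definition strict_well_order {X : Type} (R : X -> X -> Prop) : Prop :=
  (forall x, ~ R x x) /\
  (forall x y z, R x y -> R y z -> R x z) /\
  (forall x y, R x y \/ x = y \/ R y x) /\
  well_founded R.

Definition is_cardinal {X : Type} (R : X -> X -> Prop) : Prop :=
  strict_well_order R /\
  forall a : X, ~ exists f : X -> {y : X | R y a}, injective f.

Definition uncountable (X : Type) : Prop :=
  ~ exists f : X -> nat, injective f.

Definition cof_omega {X : Type} (R : X -> X -> Prop) : Prop :=
  exists s : nat -> X,
    (forall n, R (s n) (s (S n))) /\ (forall a, exists n, R a (s n)).

(* [lambda]^lambda : subsets of X of cardinality lambda *)
Definition full_size {X : Type} (S : X -> Prop) : Prop :=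
  exists f : X -> {x : X | S x}, injective f.

(* the combination  /\Gamma - \/Delta  (with /\[] = X) *)
Definition comb_set {X : Type} (G D : list (X -> Prop)) : X -> Prop :=
  fun x => (forall S, In S G -> S x) /\ (forall S, In S D -> ~ S x).

Definition independent {X : Type} (A : (X -> Prop) -> Prop) : Prop :=
  (forall S, A S -> full_size S) /\
  forall G D : list (X -> Prop),
    (forall S, In S G -> A S) ->
    (forall S, In S D -> A S) ->
    (forall S, In S G -> ~ In S D) ->
    full_size (comb_set G D).

Definition maximal_independent {X : Type} (A : (X -> Prop) -> Prop) : Prop :=
  independent A /\
  forall B : (X -> Prop) -> Prop,
    independent B -> (forall S, A S -> B S) -> forall S, B S -> A S.

From Stdlib Require Import List Arith Lia Relations Wellfounded.
From Stdlib Require Import Classical ClassicalEpsilon FunctionalExtensionality ProofIrrelevance.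
Import ListNotations.

(* Let (X, R) be an initial ordinal lambda and A an independent family in
   [lambda]^lambda with |A| <= lambda.  There are at most lambda "tasks"
   (Gamma, Delta) of finite disjoint subfamilies of A, and each combination
   /\Gamma - \/Delta has size lambda.  Using |lambda x lambda| = lambda we
   enumerate task x {+,-} x lambda in order type at most lambda, and by
   transfinite recursion pick pairwise distinct points g(t, b, xi) in the
   combination of t: at each stage fewer than lambda points have been used.
   The set B of all "+" points meets every combination in lambda points and
   misses lambda points of it, so A + {B} is still independent; but B is not
   in A, since then the "-" points of the combination B itself would lie in B.
   Hence no family of size <= lambda is maximal. *)

Definition inj (A B : Type) : Prop := exists f : A -> B, injective f.

Lemma inj_trans A B C : inj A B -> inj B C -> inj A C.
Proof. intros [f Hf] [g Hg]. exists (fun x => g (f x)). intros x y E. auto. Qed.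

Lemma inj_prod A B A' B' : inj A A' -> inj B B' -> inj (A * B) (A' * B').
Proof.
  intros [f Hf] [g Hg]. exists (fun p => (f (fst p), g (snd p))).
  intros [x1 y1] [x2 y2] E. injection E as E1 E2.
  apply Hf in E1. apply Hg in E2. congruence.
Qed.

Lemma sig_ext {A : Type} (P : A -> Prop) (u v : {x | P x}) :
  proj1_sig u = proj1_sig v -> u = v.
Proof. destruct u, v. simpl. apply ProofIrrelevanceTheory.subset_eq_compat. Qed.

Lemma swo_nat : strict_well_order lt.
Proof. split; [|split; [|split]]; [intros; lia | intros; lia | intros; lia | exact lt_wf]. Qed.

Lemma swo_inverse_image {A B : Type} (R : B -> B -> Prop) (f : A -> B) :
  strict_well_order R -> injective f -> strict_well_order (fun x y => R (f x) (f y)).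
Proof.
  intros [Hirr [Htr [Hto Hwf]]] Hf. split; [|split; [|split]].
  - intro x. apply Hirr.
  - intros x y z. apply Htr.
  - intros x y. destruct (Hto (f x) (f y)) as [H|[H|H]]; auto.
  - exact (wf_inverse_image A B R f Hwf).
Qed.

Lemma swo_sum {A B : Type} (leA : A -> A -> Prop) (leB : B -> B -> Prop) :
  strict_well_order leA -> strict_well_order leB ->
  strict_well_order (le_AsB A B leA leB).
Proof.
  intros [IA [TA [OA WA]]] [IB [TB [OB WB]]]. split; [|split; [|split]].
  - intros x H. inversion H; subst; [eapply IA | eapply IB]; eauto.
  - intros x y z H1 H2. inversion H1; subst; inversion H2; subst; constructor; eauto.
  - intros [x|x] [y|y].
    + destruct (OA x y) as [H|[H|H]]; [left|right; left|right; right]; subst; auto using le_aa.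
    + left. constructor.
    + right; right. constructor.
    + destruct (OB x y) as [H|[H|H]]; [left|right; left|right; right]; subst; auto using le_bb.
  - exact (wf_disjoint_sum A B leA leB WA WB).
Qed.

Lemma swo_slexprod {A B : Type} (leA : A -> A -> Prop) (leB : B -> B -> Prop) :
  strict_well_order leA -> strict_well_order leB ->
  strict_well_order (slexprod A B leA leB).
Proof.
  intros [IA [TA [OA WA]]] [IB [TB [OB WB]]]. split; [|split; [|split]].
  - intros x H. inversion H; subst; [eapply IA | eapply IB]; eauto.
  - intros x y z H1 H2. inversion H1; subst; inversion H2; subst;
      solve [apply left_slex; eauto | apply right_slex; eauto].
  - intros [x1 x2] [y1 y2]. destruct (OA x1 y1) as [H|[<-|H]].
    + left. apply left_slex, H.
    + destruct (OB x2 y2) as [H|[<-|H]]; [left|right; left|right; right];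
        auto using right_slex.
    + right; right. apply left_slex, H.
  - exact (wf_slexprod A B leA leB WA WB).
Qed.

Section InjectiveSelection.
Variables (W V : Type) (lt : W -> W -> Prop).
Hypothesis lt_swo : strict_well_order lt.

Lemma fresh_value (T : V -> Prop) p (h : forall q, lt q p -> V) :
  ~ inj {v | T v} {q | lt q p} -> exists v, T v /\ forall q H, h q H <> v.
Proof.
  intro small. apply NNPP. intro covered. apply small.
  assert (preimage : forall v : {v | T v},
             exists q : {q | lt q p}, h (proj1_sig q) (proj2_sig q) = proj1_sig v).
  { intros [v Tv]. apply NNPP. intro Hv. apply covered. exists v. split; [exact Tv|].
    intros q H E. apply Hv. exists (exist _ q H). exact E. }
  exists (fun v => proj1_sig (constructive_indefinite_description _ (preimage v))).
  intros v1 v2 E. apply sig_ext.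
  destruct (constructive_indefinite_description _ (preimage v1)) as [q1 E1].
  destruct (constructive_indefinite_description _ (preimage v2)) as [q2 E2].
  simpl in E. subst q2. congruence.
Qed.

Lemma injective_selection (T : W -> V -> Prop) :
  (forall p, ~ inj {v | T p v} {q | lt q p}) ->
  exists g : W -> V, (forall p, T p (g p)) /\ injective g.
Proof.
  destruct lt_swo as [_ [_ [lt_total lt_wf]]]. intro big.
  set (F := fun p (h : forall q, lt q p -> V) =>
        proj1_sig (constructive_indefinite_description _ (fresh_value (T p) p h (big p)))).
  set (g := Fix lt_wf (fun _ => V) F).
  assert (unfold_g : forall p, g p = F p (fun q _ => g q)).
  { intro p. apply (Fix_eq lt_wf (fun _ => V) F). intros x f1 f2 Hf. f_equal.
    apply functional_extensionality_dep; intro y.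
    apply functional_extensionality_dep; intro H. apply Hf. }
  assert (g_spec : forall p, T p (g p) /\ forall q, lt q p -> g q <> g p).
  { intro p. rewrite (unfold_g p). unfold F.
    destruct (constructive_indefinite_description _ _) as [v [Tv fresh]].
    split; [exact Tv|]. intros q Hq. exact (fresh q Hq). }
  exists g. split; [intro p; apply g_spec|].
  intros p q E. destruct (lt_total p q) as [H|[H|H]]; auto.
  - exfalso. exact (proj2 (g_spec q) p H E).
  - exfalso. exact (proj2 (g_spec p) q H (eq_sym E)).
Qed.

End InjectiveSelection.

Lemma nat_not_inj_finite K : ~ inj nat {k | k < K}.
Proof.
  induction K as [|K IH]; intros [f Hf].
  - destruct (f 0) as [k Hk]. lia.
  - assert (bound : forall j, proj1_sig (f j) <> K -> proj1_sig (f j) < K).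
    { intros j Hj. pose proof (proj2_sig (f j)). simpl in *. lia. }
    apply IH. destruct (classic (exists i, proj1_sig (f i) = K)) as [[i Hi]|Hno].
    + set (shift := fun j => if j <? i then j else S j).
      assert (Hlt : forall j, proj1_sig (f (shift j)) < K).
      { intro j. apply bound. intro E.
        assert (E' : proj1_sig (f (shift j)) = proj1_sig (f i)) by congruence.
        apply sig_ext, Hf in E'.
        unfold shift in E'. destruct (Nat.ltb_spec j i); lia. }
      exists (fun j => exist (fun k => k < K) _ (Hlt j)). intros j1 j2 E.
      apply (f_equal (@proj1_sig _ _)) in E; simpl in E; apply sig_ext, Hf in E.
      unfold shift in E. destruct (Nat.ltb_spec j1 i), (Nat.ltb_spec j2 i); lia.
    + assert (Hlt : forall j, proj1_sig (f j) < K).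
      { intro j. apply bound. intro E. apply Hno. exists j. exact E. }
      exists (fun j => exist (fun k => k < K) _ (Hlt j)). intros j1 j2 E.
      apply (f_equal (@proj1_sig _ _)) in E; simpl in E; apply sig_ext, Hf in E. exact E.
Qed.

Lemma finite_square K : inj ({k | k < K} * {k | k < K}) {k | k < K * K}.
Proof.
  assert (Hlt : forall i j, i < K -> j < K -> i * K + j < K * K) by (intros; nia).
  exists (fun p => exist (fun k => k < K * K) _ (Hlt _ _ (proj2_sig (fst p)) (proj2_sig (snd p)))).
  intros [[i1 H1] [j1 J1]] [[i2 H2] [j2 J2]] E.
  apply (f_equal (@proj1_sig _ _)) in E. simpl in E.
  assert (i1 = i2) as <- by nia. assert (j1 = j2) as <- by lia.
  f_equal; apply sig_ext; reflexivity.
Qed.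

Section GoedelOrder.
Variables (W : Type) (lt : W -> W -> Prop).
Hypothesis lt_swo : strict_well_order lt.

Definition lte (x y : W) : Prop := lt x y \/ x = y.

Definition wmax (x y : W) : W := if excluded_middle_informative (lt x y) then y else x.

Lemma lte_trans x y z : lte x y -> lte y z -> lte x z.
Proof.
  destruct lt_swo as [_ [Htr _]].
  intros [H1| <-] [H2| <-]; unfold lte; eauto.
Qed.

Lemma lte_wmax_l x y : lte x (wmax x y).
Proof. unfold lte, wmax. destruct (excluded_middle_informative (lt x y)); auto. Qed.

Lemma lte_wmax_r x y : lte y (wmax x y).
Proof.
  destruct lt_swo as [_ [_ [Hto _]]].
  unfold lte, wmax. destruct (excluded_middle_informative (lt x y)) as [|Hn]; auto.
  destruct (Hto x y) as [H|[H|H]]; auto. contradiction.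
Qed.

Definition goedel_key (p : W * W) : W * (W * W) := (wmax (fst p) (snd p), p).

Definition goedel_lt (p q : W * W) : Prop :=
  slexprod W (W * W) lt (slexprod W W lt lt) (goedel_key p) (goedel_key q).

Lemma goedel_swo : strict_well_order goedel_lt.
Proof.
  apply (swo_inverse_image _ goedel_key).
  - apply swo_slexprod; [|apply swo_slexprod]; exact lt_swo.
  - intros p q E. injection E as _ E. exact E.
Qed.

Lemma goedel_lt_bound p q :
  goedel_lt q p ->
  lte (fst q) (wmax (fst p) (snd p)) /\ lte (snd q) (wmax (fst p) (snd p)).
Proof.
  intro H.
  assert (max_le : lte (wmax (fst q) (snd q)) (wmax (fst p) (snd p))).
  { inversion H as [a a' b b' Hlt|a b b' Hlt]; [left; exact Hlt | right; reflexivity]. }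
  split; eapply lte_trans; [apply lte_wmax_l | exact max_le | apply lte_wmax_r | exact max_le].
Qed.

Lemma goedel_predecessors p :
  let m := wmax (fst p) (snd p) in
  inj {q | goedel_lt q p} ({x | lte x m} * {x | lte x m}).
Proof.
  intro m.
  exists (fun q => (exist (fun x => lte x m) _ (proj1 (goedel_lt_bound p _ (proj2_sig q))),
                    exist (fun x => lte x m) _ (proj2 (goedel_lt_bound p _ (proj2_sig q))))).
  intros q1 q2 E. injection E as E1 E2. apply sig_ext.
  destruct (proj1_sig q1), (proj1_sig q2). simpl in *. congruence.
Qed.

End GoedelOrder.

Arguments lte {W} lt x y.
Arguments wmax {W} lt x y.
Arguments goedel_lt {W} lt p q.

(* For a strict well-order (X, R) and a bound a (None
   standing for all of X), seg a = omega + {w | w < a} is an infinite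
   well-ordered set, and |seg a x seg a| = |seg a| by induction on a. *)
Section Segments.
Variables (X : Type) (R : X -> X -> Prop).
Hypothesis R_swo : strict_well_order R.

Definition below (a : option X) (w : X) : Prop :=
  match a with None => True | Some b => R w b end.

Definition opt_lt (b a : option X) : Prop :=
  match b, a with
  | Some u, None => True
  | Some u, Some v => R u v
  | _, _ => False
  end.

Lemma opt_lt_wf : well_founded opt_lt.
Proof.
  destruct R_swo as [_ [_ [_ R_wf]]].
  assert (acc_some : forall u, Acc opt_lt (Some u)).
  { intro u. induction u as [u IH] using (well_founded_induction R_wf).
    constructor. intros [v|] H; [exact (IH v H) | contradiction]. }
  intros [u|]; [exact (acc_some u)|].
  constructor. intros [v|] H; [exact (acc_some v) | contradiction].
Qed.

Lemma below_opt_lt a w : below a w -> opt_lt (Some w) a.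
Proof. destruct a; simpl; auto. Qed.

Definition seg (a : option X) : Type := (nat + {w | below a w})%type.

Definition seg_lt (a : option X) : seg a -> seg a -> Prop :=
  le_AsB nat {w | below a w} lt (fun u v => R (proj1_sig u) (proj1_sig v)).

Lemma seg_swo a : strict_well_order (seg_lt a).
Proof.
  apply swo_sum; [exact swo_nat|].
  apply (swo_inverse_image R (@proj1_sig _ _) R_swo). intros u v. apply sig_ext.
Qed.

Lemma seg_mono b a : opt_lt b a -> inj (seg b) (seg a).
Proof.
  destruct R_swo as [_ [R_trans _]]. intro Hba.
  assert (lift : forall w, below b w -> below a w).
  { destruct a as [a|], b as [b|]; simpl in *; intros; eauto; contradiction. }
  exists (fun x => match x with
                   | inl n => inl n
                   | inr w => inr (exist _ (proj1_sig w) (lift _ (proj2_sig w)))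
                   end).
  intros [n1|w1] [n2|w2] E; try discriminate; injection E as E; f_equal; auto.
  apply sig_ext. exact E.
Qed.

Lemma seg_finite_part a n : inj {x : seg a | lte (seg_lt a) x (inl n)} {k | k < S n}.
Proof.
  set (index := fun x : seg a => match x with inl k => k | inr _ => 0 end).
  assert (Hnat : forall x : {x : seg a | lte (seg_lt a) x (inl n)},
             proj1_sig x = inl (index (proj1_sig x)) /\ index (proj1_sig x) < S n).
  { intros [x [H|H]]; simpl.
    - inversion H; subst. simpl. split; [reflexivity | lia].
    - subst. simpl. auto. }
  exists (fun x => exist (fun k => k < S n) _ (proj2 (Hnat x))).
  intros x1 x2 E. apply (f_equal (@proj1_sig _ _)) in E. simpl in E.
  apply sig_ext. rewrite (proj1 (Hnat x1)), (proj1 (Hnat x2)). congruence.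
Qed.

(* Elements up to w fit into the segment below w (which has omega in front). *)
Lemma seg_initial_part a w :
  inj {x : seg a | lte (seg_lt a) x (inr w)} (seg (Some (proj1_sig w))).
Proof.
  exists (fun x => match proj1_sig x with
                   | inl n => inl (S n)
                   | inr v =>
                       match excluded_middle_informative (R (proj1_sig v) (proj1_sig w)) with
                       | left H => inr (exist (below (Some (proj1_sig w))) (proj1_sig v) H)
                       | right _ => inl 0
                       end
                   end).
  intros [[n1|v1] H1] [[n2|v2] H2] E; apply sig_ext; simpl in *;
    repeat destruct excluded_middle_informative; try discriminate;
    try (injection E as E); try congruence.
  - f_equal. apply sig_ext. exact E.
  - destruct H1 as [H1|H1]; [inversion H1; contradiction|].
    destruct H2 as [H2|H2]; [inversion H2; contradiction|]. congruence.
Qed.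

(* If seg a injects into a shorter segment, use the induction hypothesis
   there; otherwise seg a is initial and every proper Goedel-initial segment of
   seg a x seg a lies in a square of a shorter segment or in a finite square,
   hence is smaller than seg a, so the pairs can be selected injectively. *)
Lemma seg_square a : inj (seg a * seg a) (seg a).
Proof.
  induction a as [a IH] using (well_founded_induction opt_lt_wf).
  destruct (classic (exists b, opt_lt b a /\ inj (seg a) (seg b))) as [[b [Hba Hab]]|no_smaller].
  - exact (inj_trans _ _ _ (inj_prod _ _ _ _ Hab Hab) (inj_trans _ _ _ (IH b Hba) (seg_mono b a Hba))).
  - assert (selection := injective_selection _ _ _ (goedel_swo _ _ (seg_swo a))
                (fun _ (_ : seg a) => True)).
    destruct selection as [g [_ g_inj]]; [|exists g; exact g_inj].
    intros p small.
    assert (all_small : inj (seg a) ({x | lte (seg_lt a) x (wmax (seg_lt a) (fst p) (snd p))} *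
                                     {x | lte (seg_lt a) x (wmax (seg_lt a) (fst p) (snd p))})).
    { refine (inj_trans _ _ _ _ (inj_trans _ _ _ small (goedel_predecessors _ _ (seg_swo a) p))).
      exists (fun x => exist (fun _ => True) x I). intros x y E. congruence. }
    destruct (wmax (seg_lt a) (fst p) (snd p)) as [n|w].
    + apply (nat_not_inj_finite (S n * S n)).
      refine (inj_trans _ _ _ _ (inj_trans _ _ _ all_small
                (inj_trans _ _ _ (inj_prod _ _ _ _ (seg_finite_part a n) (seg_finite_part a n))
                   (finite_square (S n))))).
      exists inl. intros x y E. congruence.
    + apply no_smaller. exists (Some (proj1_sig w)).
      split; [exact (below_opt_lt a _ (proj2_sig w))|].
      exact (inj_trans _ _ _ all_small
               (inj_trans _ _ _ (inj_prod _ _ _ _ (seg_initial_part a w) (seg_initial_part a w))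
                  (IH _ (below_opt_lt a _ (proj2_sig w))))).
Qed.

End Segments.

Arguments below {X} R a w.
Arguments seg {X} R a.

(* Hilbert's hotel: an infinite type absorbs an extra copy of omega. *)
Lemma nat_sum_absorb (X : Type) (s : nat -> X) : injective s -> inj (nat + X) X.
Proof.
  intro s_inj.
  set (shift := fun x => match excluded_middle_informative (exists k, s k = x) with
                         | left H => s (2 * proj1_sig (constructive_indefinite_description _ H))
                         | right _ => x
                         end).
  assert (shift_spec : forall x, (exists k, s k = x /\ shift x = s (2 * k)) \/
                                 ((forall k, s k <> x) /\ shift x = x)).
  { intro x. unfold shift. destruct excluded_middle_informative as [H|H].
    - left. destruct (constructive_indefinite_description _ H) as [k Hk]. eauto.
    - right. split; [|reflexivity]. intros k Hk. apply H. eauto. }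
  exists (fun y => match y with inl n => s (2 * n + 1) | inr x => shift x end).
  intros [n1|x1] [n2|x2] E.
  - apply s_inj in E. f_equal. lia.
  - destruct (shift_spec x2) as [[k [_ Hk]]|[Hn Hk]]; rewrite Hk in E.
    + apply s_inj in E. lia.
    + exfalso. exact (Hn _ E).
  - destruct (shift_spec x1) as [[k [_ Hk]]|[Hn Hk]]; rewrite Hk in E.
    + apply s_inj in E. lia.
    + exfalso. exact (Hn _ (eq_sym E)).
  - f_equal.
    destruct (shift_spec x1) as [[k1 [<- H1]]|[N1 H1]], (shift_spec x2) as [[k2 [<- H2]]|[N2 H2]];
      rewrite H1, H2 in E.
    + apply s_inj in E. f_equal. lia.
    + exfalso. exact (N2 _ E).
    + exfalso. exact (N1 _ (eq_sym E)).
    + exact E.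
Qed.

Lemma square_absorb (X : Type) (R : X -> X -> Prop) (s : nat -> X) :
  strict_well_order R -> injective s -> inj (X * X) X.
Proof.
  intros R_swo s_inj.
  assert (into_seg : inj X (seg R None)).
  { exists (fun x => inr (exist (below R None) x I)). intros x y E. congruence. }
  assert (out_of_seg : inj (seg R None) X).
  { refine (inj_trans _ _ _ _ (nat_sum_absorb X s s_inj)).
    exists (fun y => match y with inl n => inl n | inr w => inr (proj1_sig w) end).
    intros [n1|w1] [n2|w2] E; try discriminate; injection E as E; f_equal; auto.
    apply sig_ext. exact E. }
  exact (inj_trans _ _ _ (inj_prod _ _ _ _ into_seg into_seg)
           (inj_trans _ _ _ (seg_square X R R_swo None) out_of_seg)).
Qed.

Lemma pair_into (X A B : Type) : inj (X * X) X -> inj A X -> inj B X -> inj (A * B) X.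
Proof. intros HX HA HB. exact (inj_trans _ _ _ (inj_prod _ _ _ _ HA HB) HX). Qed.

Lemma list_into (X : Type) (z0 z1 : X) : inj (X * X) X -> z0 <> z1 -> inj (list X) X.
Proof.
  intros [P HP] Hz.
  exists (fix code l := match l with
                        | [] => P (z0, z0)
                        | y :: l => P (z1, P (y, code l))
                        end).
  intros l1. induction l1 as [|y1 l1 IH]; intros [|y2 l2] E; apply HP in E.
  - reflexivity.
  - injection E as E _. contradiction.
  - injection E as E _. symmetry in E. contradiction.
  - injection E as E. apply HP in E. injection E as -> E. f_equal. exact (IH _ E).
Qed.

Lemma map_inj_on {T Y : Type} (Q : T -> Prop) (e : T -> Y) :
  (forall u v, Q u -> Q v -> e u = e v -> u = v) ->
  forall l1 l2, (forall u, In u l1 -> Q u) -> (forall u, In u l2 -> Q u) ->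
  map e l1 = map e l2 -> l1 = l2.
Proof.
  intros e_inj. induction l1 as [|u1 l1 IH]; intros [|u2 l2] Q1 Q2 E;
    try reflexivity; try discriminate.
  injection E as Eu El. f_equal.
  - apply e_inj; [apply Q1 | apply Q2 | exact Eu]; simpl; auto.
  - apply IH; [intros u Hu; apply Q1 | intros u Hu; apply Q2 | exact El]; simpl; auto.
Qed.

Lemma extend_inj_on {T Y : Type} (Q : T -> Prop) (y0 : Y) :
  inj {u | Q u} Y ->
  exists e : T -> Y, forall u v, Q u -> Q v -> e u = e v -> u = v.
Proof.
  intros [f f_inj].
  exists (fun u => match excluded_middle_informative (Q u) with
                   | left H => f (exist Q u H)
                   | right _ => y0
                   end).
  intros u v Hu Hv. repeat destruct excluded_middle_informative; try contradiction.
  intro E. apply f_inj in E. exact (f_equal (@proj1_sig _ _) E).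
Qed.

Lemma increasing_sequence_injective {X : Type} (R : X -> X -> Prop) (s : nat -> X) :
  strict_well_order R -> (forall n, R (s n) (s (S n))) -> injective s.
Proof.
  intros [R_irr [R_trans [_ _]]] s_incr.
  assert (s_mono : forall n m, n < m -> R (s n) (s m)).
  { intros n m H. induction H; eauto. }
  intros n m E. destruct (Nat.lt_trichotomy n m) as [H|[H|H]]; auto;
    apply s_mono in H; rewrite E in H; exfalso; exact (R_irr _ H).
Qed.

Lemma full_size_of_points {X : Type} (S : X -> Prop) (h : X -> X) :
  injective h -> (forall x, S (h x)) -> full_size S.
Proof.
  intros h_inj h_in. exists (fun x => exist S (h x) (h_in x)).
  intros x y E. apply h_inj. exact (f_equal (@proj1_sig _ _) E).
Qed.

Definition classical_eq_dec {T : Type} (x y : T) : {x = y} + {x <> y} :=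
  excluded_middle_informative (x = y).

Section Diagonalisation.
Variables (X : Type) (R : X -> X -> Prop) (s : nat -> X) (A : (X -> Prop) -> Prop).
Hypotheses (R_card : is_cardinal R) (s_inj : injective s).
Hypotheses (A_indep : independent A) (A_small : inj {S | A S} X).

Definition admissible (G D : list (X -> Prop)) : Prop :=
  (forall S, In S G -> A S) /\ (forall S, In S D -> A S) /\ (forall S, In S G -> ~ In S D).

Definition task : Type :=
  {gd : list (X -> Prop) * list (X -> Prop) | admissible (fst gd) (snd gd)}.

Definition task_set (t : task) : X -> Prop := comb_set (fst (proj1_sig t)) (snd (proj1_sig t)).

Lemma task_set_full t : full_size (task_set t).
Proof.
  destruct t as [[G D] [HG [HD Hdis]]]. exact (proj2 A_indep G D HG HD Hdis).
Qed.

Lemma tasks_into : inj (task * bool * X) X.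
Proof.
  assert (X_square : inj (X * X) X)
    by exact (square_absorb X R s (proj1 R_card) s_inj).
  assert (s01 : s 0 <> s 1) by (intro E; apply s_inj in E; discriminate).
  destruct (extend_inj_on A (s 0) A_small) as [e e_inj].
  assert (code_tasks : inj task (list X * list X)).
  { exists (fun t => (map e (fst (proj1_sig t)), map e (snd (proj1_sig t)))).
    intros [[G1 D1] [HG1 [HD1 Hdis1]]] [[G2 D2] [HG2 [HD2 Hdis2]]] E.
    injection E as EG ED. apply sig_ext. simpl in *.
    f_equal; eapply map_inj_on; eauto. }
  assert (code_bool : inj bool X).
  { exists (fun b : bool => if b then s 1 else s 0).
    intros [|] [|] E; congruence. }
  assert (code_lists := list_into X (s 0) (s 1) X_square s01).
  apply (pair_into X _ _ X_square); [|exists (fun x => x); intros x y E; exact E].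
  apply (pair_into X _ _ X_square); [|exact code_bool].
  exact (inj_trans _ _ _ code_tasks (pair_into X _ _ X_square code_lists code_lists)).
Qed.

Lemma diagonal_points :
  exists g : task * bool * X -> X,
    (forall t b x, task_set t (g (t, b, x))) /\ injective g.
Proof.
  destruct tasks_into as [E E_inj].
  destruct R_card as [R_swo initial].
  destruct (injective_selection _ _ _ (swo_inverse_image R E R_swo E_inj)
              (fun p => task_set (fst (fst p)))) as [g [g_in g_inj]].
  - intros p [c c_inj]. apply (initial (E p)).
    destruct (task_set_full (fst (fst p))) as [h h_inj].
    exists (fun x => exist (fun y => R y (E p)) _ (proj2_sig (c (h x)))).
    intros x y Exy. apply (f_equal (@proj1_sig _ _)) in Exy. simpl in Exy.
    apply E_inj, sig_ext, c_inj, h_inj in Exy. exact Exy.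
  - exists g. split; [intros t b x; exact (g_in (t, b, x)) | exact g_inj].
Qed.

Section Witness.
Variable g : task * bool * X -> X.
Hypotheses (g_in : forall t b x, task_set t (g (t, b, x))) (g_inj : injective g).

Definition witness : X -> Prop := fun x => exists t y, g (t, true, y) = x.

Lemma negative_points_outside t y : ~ witness (g (t, false, y)).
Proof. intros [t' [y' E]]. apply g_inj in E. discriminate. Qed.

Lemma task_points_full (t : task) (b : bool) (S : X -> Prop) :
  (forall y, task_set t (g (t, b, y)) -> S (g (t, b, y))) -> full_size S.
Proof.
  intro H. apply (full_size_of_points S (fun y => g (t, b, y))).
  - intros y1 y2 E. apply g_inj in E. congruence.
  - intro y. apply H, g_in.
Qed.

Lemma members_of_extension (L : list (X -> Prop)) :
  (forall S, In S L -> A S \/ S = witness) -> forall S, In S (remove classical_eq_dec witness L) -> A S.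
Proof.
  intros HL S HS. destruct (in_remove classical_eq_dec L S witness HS) as [HS' Hne].
  destruct (HL S HS'); [assumption | contradiction].
Qed.

(* A + {B} is independent: a combination involving B positively (negatively)
   contains the positive (negative) points of the task obtained by removing B. *)
Lemma extension_independent : independent (fun S => A S \/ S = witness).
Proof.
  split.
  - intros S [HS| ->]; [exact (proj1 A_indep S HS)|].
    assert (t0 : admissible [] []) by (repeat split; intros S []).
    apply (task_points_full (exist _ ([], []) t0) true).
    intros y _. exists (exist _ ([], []) t0), y. reflexivity.
  - intros G D HG HD Hdis.
    assert (only_A : forall L : list (X -> Prop), (forall S, In S L -> A S \/ S = witness) ->
                     ~ In witness L -> forall S, In S L -> A S).
    { intros L HL Hw S HS. destruct (HL S HS) as [HA| ->]; [assumption | contradiction]. }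
    destruct (classic (In witness G)) as [WG|WG], (classic (In witness D)) as [WD|WD].
    + exfalso. exact (Hdis _ WG WD).
    + assert (t : admissible (remove classical_eq_dec witness G) D).
      { split; [|split]; [apply members_of_extension, HG | apply only_A; assumption |].
        intros S HS. apply Hdis, (in_remove classical_eq_dec G S witness HS). }
      apply (task_points_full (exist _ (_, D) t) true). intros y [inG notD]. split.
      * intros S HS. destruct (classical_eq_dec S witness) as [->|Hne].
        -- exists (exist _ (_, D) t), y. reflexivity.
        -- apply inG, in_in_remove; assumption.
      * exact notD.
    + assert (t : admissible G (remove classical_eq_dec witness D)).
      { split; [|split]; [apply only_A; assumption | apply members_of_extension, HD |].
        intros S HS HS'. apply (Hdis S HS), (in_remove classical_eq_dec D S witness HS'). }
      apply (task_points_full (exist _ (G, _) t) false). intros y [inG notD]. split.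
      * exact inG.
      * intros S HS. destruct (classical_eq_dec S witness) as [->|Hne].
        -- apply negative_points_outside.
        -- apply notD, in_in_remove; assumption.
    + apply (proj2 A_indep); [apply only_A; assumption | apply only_A; assumption | exact Hdis].
Qed.

(* B is not in A: otherwise the negative points of the task ([B], []) would
   lie in B. *)
Lemma witness_not_member : ~ A witness.
Proof.
  intro Hw.
  assert (t : admissible [witness] []).
  { split; [|split].
    - intros S [<-|[]]. exact Hw.
    - intros S [].
    - intros S _ []. }
  destruct (g_in (exist _ ([witness], []) t) false (s 0)) as [inG _].
  exact (negative_points_outside _ _ (inG witness (or_introl eq_refl))).
Qed.

End Witness.
End Diagonalisation.

Theorem mainTheorem2 (X : Type) (R : X -> X -> Prop) :
  is_cardinal R -> uncountable X -> cof_omega R ->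
  forall A : (X -> Prop) -> Prop,
    maximal_independent A ->
    ~ exists f : {S : X -> Prop | A S} -> X, injective f.
Proof.
  intros R_card _ [s [s_incr _]] A [A_indep A_maximal] A_small.
  pose proof (increasing_sequence_injective R s (proj1 R_card) s_incr) as s_inj.
  destruct (diagonal_points X R s A R_card s_inj A_indep A_small) as [g [g_in g_inj]].
  apply (witness_not_member X s A g g_in g_inj).
  apply (A_maximal _ (extension_independent X A A_indep g g_in g_inj)); [intros S HS; left; exact HS | right; reflexivity].
Qed.
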